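(* Let $\mathcal S$ be a collection of nonempty subsets of a set $X$ with a basis $\mathcal B\subseteq\mathcal S$. Then for every $A\in\mathcal B$, $[A]_{\mathcal S}\subseteq\mathcal B$.
   Context: Fix a nonempty set $X$; $A^c:=X\setminus A$. $A\perp B$ means $A\cap B=\emptyset$ and $A\ne B^c$. $A$ dominates $B$ if $A\supseteq B$ or $A\supseteq B^c$. A collection is orthogonal if any two distinct members are orthogonal. A basis for $\mathcal S$ is an orthogonal $\mathcal B\subseteq\mathcal S$ such that every member of $\mathcal S$ is dominated by some member of $\mathcal B$. For $A,B\in\mathcal S$, $B$ is $\mathcal S$-maximally orthogonal to $A$ if $B\perp A$ and no $C\in\mathcal S$ satisfies $C\perp A$, $C\supsetneq B$; $[A]_{\mathcal S}:=\{A\}\cup\{B\in\mathcal S:B$ is $\mathcal S$-maximally orthogonal to $A\}$. *)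

Definition set (X : Type) := X -> Prop.

Definition seteq {X : Type} (A B : set X) : Prop := forall x, A x <-> B x.
Definition subset {X : Type} (A B : set X) : Prop := forall x, A x -> B x.
Definition psubset {X : Type} (A B : set X) : Prop := subset A B /\ ~ seteq A B.
Definition compl {X : Type} (A : set X) : set X := fun x => ~ A x.
Definition nonempty {X : Type} (A : set X) : Prop := exists x, A x.

Definition orth {X : Type} (A B : set X) : Prop :=
  (forall x, ~ (A x /\ B x)) /\ ~ seteq A (compl B).

Definition dominates {X : Type} (A B : set X) : Prop :=
  subset B A \/ subset (compl B) A.

Definition orthogonal {X : Type} (C : set X -> Prop) : Prop :=
  forall A B, C A -> C B -> ~ seteq A B -> orth A B.

Definition is_basis {X : Type} (S B : set X -> Prop) : Prop :=
  (forall A, B A -> S A) /\ orthogonal B /\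
  (forall C, S C -> exists D, B D /\ dominates D C).

Definition max_orth {X : Type} (S : set X -> Prop) (A B : set X) : Prop :=
  orth B A /\ ~ (exists C, S C /\ orth C A /\ psubset B C).

(* [A]_S = {A} ∪ {B ∈ S : B S-maximally orthogonal to A} *)
Definition orth_class {X : Type} (S : set X -> Prop) (A : set X) : set X -> Prop :=
  fun B => B = A \/ (S B /\ max_orth S A B).

Definition mem_ext {X : Type} (C : set X -> Prop) (A : set X) : Prop :=
  exists A', C A' /\ seteq A A'.

(* Take C in [A]_S with C <> A and a basis element D dominating C. D cannot be A:
   A ⊇ C would meet C, and A ⊇ C^c would force C = A^c. So D ⊥ A by orthogonality
   of the basis. D ⊇ C^c is impossible since A is nonempty and disjoint from both
   C and D; hence D ⊇ C, and maximality of C gives C = D ∈ B. *)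

From Stdlib Require Import Classical.

Lemma seteq_compl_of_compl_subset {X : Type} (A C : set X) :
  (forall x, ~ (C x /\ A x)) -> subset (compl C) A -> seteq C (compl A).
Proof.
  intros hdisj hsub x; unfold compl; split.
  - intros hC hA; exact (hdisj x (conj hC hA)).
  - intros hnA; apply NNPP; intros hnC; exact (hnA (hsub x hnC)).
Qed.

Lemma dominates_orth_partner_neq {X : Type} (A C D : set X) :
  nonempty C -> orth C A -> dominates D C -> ~ seteq D A.
Proof.
  intros [x hx] [hdisj hncompl] hdom hDA.
  destruct hdom as [hsub | hsub].
  - exact (hdisj x (conj hx (proj1 (hDA x) (hsub x hx)))).
  - apply hncompl, seteq_compl_of_compl_subset; [exact hdisj|].
    intros y hy; exact (proj1 (hDA y) (hsub y hy)).
Qed.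

Lemma orth_dominates_subset {X : Type} (A C D : set X) :
  nonempty A -> orth C A -> orth D A -> dominates D C -> subset C D.
Proof.
  intros [x hx] [hCA _] [hDA _] [hsub | hsub]; [exact hsub|].
  exfalso; destruct (classic (C x)) as [hC | hnC].
  - exact (hCA x (conj hC hx)).
  - exact (hDA x (conj (hsub x hnC) hx)).
Qed.

Lemma max_orth_seteq_of_subset {X : Type} (S : set X -> Prop) (A C D : set X) :
  S D -> orth D A -> max_orth S A C -> subset C D -> seteq C D.
Proof.
  intros hSD hDA [_ hmax] hCD; apply NNPP; intros hneq.
  apply hmax; exists D; split; [exact hSD | split; [exact hDA | split; assumption]].
Qed.

Theorem mainTheorem12 (X : Type) (x0 : X) (S B : set X -> Prop)
  (hne : forall A, S A -> nonempty A)
  (hB : is_basis S B) :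
  forall A, B A -> forall C, orth_class S A C -> mem_ext B C.
Proof.
  destruct hB as [hBS [hBorth hBdom]].
  intros A hA C [-> | [hSC hmax]].
  - exists A; split; [exact hA | intro; tauto].
  - destruct (hBdom C hSC) as [D [hD hdom]].
    assert (hDA : orth D A).
    { apply (hBorth D A hD hA).
      exact (dominates_orth_partner_neq A C D (hne C hSC) (proj1 hmax) hdom). }
    exists D; split; [exact hD|].
    apply (max_orth_seteq_of_subset S A C D (hBS D hD) hDA hmax).
    exact (orth_dominates_subset A C D (hne A (hBS A hA)) (proj1 hmax) hDA hdom).
Qed.
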